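(* Let $p_1,\dots,p_d\in(0,1)$ with $p_i\neq\frac12$ for all $i$, and let $\mu(X)=\prod_{i:x_i=1}p_i\prod_{i:x_i=0}(1-p_i)$ for $X\in Q_d$. Then this distribution has an equilibrium.
   Context: $Q_d=\{0,1\}^d$ with the Hamming distance $d(X,Y)=|\{i: x_i\neq y_i\}|$. For a probability distribution $\mu$ on $Q_d$ (extended additively to subsets), and $A,B\in Q_d$, let $V(A,B)=\{X: d(X,A)<d(X,B)\}$, $T(A,B)=\{X: d(X,A)=d(X,B)\}$, $P_1(A,B)=\mu(V(A,B))+\frac12\mu(T(A,B))$, $P_2(A,B)=\mu(V(B,A))+\frac12\mu(T(A,B))$. $(A,B)$ is an equilibrium if $P_1(A,B)\ge P_1(A',B)$ for all $A'\in Q_d$ and $P_2(A,B)\ge P_2(A,B')$ for all $B'\in Q_d$. *)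

From HB Require Import structures.
From mathcomp Require Import all_boot all_order all_algebra.
Set Implicit Arguments. Unset Strict Implicit. Unset Printing Implicit Defensive.
Import Order.TTheory GRing.Theory Num.Theory.
Local Open Scope ring_scope.

Definition cube (d : nat) := {ffun 'I_d -> bool}.

Definition hamming d (X Y : cube d) : nat := #|[set i | X i != Y i]|.

Definition meas (R : numDomainType) d (mu : cube d -> R) (S : {set cube d}) : R :=
  \sum_(X in S) mu X.

Definition Vor d (A B : cube d) : {set cube d} :=
  [set X | hamming X A < hamming X B]%N.
Definition Tie d (A B : cube d) : {set cube d} :=
  [set X | hamming X A == hamming X B].

Definition payoff1 (R : numFieldType) d (mu : cube d -> R) (A B : cube d) : R :=
  meas mu (Vor A B) + meas mu (Tie A B) / 2.
Definition payoff2 (R : numFieldType) d (mu : cube d -> R) (A B : cube d) : R :=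
  meas mu (Vor B A) + meas mu (Tie A B) / 2.

Definition equilibrium (R : numFieldType) d (mu : cube d -> R) (A B : cube d) : Prop :=
  (forall A' : cube d, payoff1 mu A' B <= payoff1 mu A B) /\
  (forall B' : cube d, payoff2 mu A B' <= payoff2 mu A B).

Definition prod_dist (R : numFieldType) d (p : 'I_d -> R) (X : cube d) : R :=
  \prod_(i < d) (if X i then p i else 1 - p i).

(* Let M be the coordinatewise mode of the product measure (M_i = 1 iff p_i > 1/2).
   We show that (M, M) is an equilibrium: for every A, the points strictly closer
   to M than to A carry at least as much mass as those strictly closer to A, so
   deviating from M never pays.  Writing Z = d(X,A) - d(X,M), this says that Z
   stochastically dominates -Z.  Only coordinates where A and M differ contribute
   to Z, each by an independent +1 (with probability >= 1/2) or -1, and the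
   dominance E[h(-Z)] <= E[h(Z)] for nondecreasing h is proved by induction on
   the dimension. *)
From mathcomp Require Import all_boot all_order all_algebra.
From mathcomp Require Import lra.
Import Order.TTheory GRing.Theory Num.Theory.
Local Open Scope ring_scope.
Set Implicit Arguments. Unset Strict Implicit. Unset Printing Implicit Defensive.

Section CubeCons.
Variable d : nat.

Definition cube_cons (b : bool) (Y : cube d) : cube d.+1 :=
  [ffun i => if unlift ord0 i is Some j then Y j else b].
Definition cube_behead (X : cube d.+1) : cube d := [ffun i => X (lift ord0 i)].

Lemma cube_cons0 b Y : cube_cons b Y ord0 = b.
Proof. by rewrite ffunE unlift_none. Qed.

Lemma cube_consK b Y : cube_behead (cube_cons b Y) = Y.
Proof. by apply/ffunP => i; rewrite !ffunE liftK. Qed.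

Lemma cube_eta (X : cube d.+1) : cube_cons (X ord0) (cube_behead X) = X.
Proof.
by apply/ffunP => i; rewrite ffunE; case: unliftP => [j ->|->]; rewrite ?ffunE.
Qed.

Lemma sum_cube_cons (V : nmodType) (F : cube d.+1 -> V) :
  \sum_(X : cube d.+1) F X = \sum_(b : bool) \sum_(Y : cube d) F (cube_cons b Y).
Proof.
rewrite pair_big /= (reindex (fun u : bool * cube d => cube_cons u.1 u.2)) //.
by exists (fun X : cube d.+1 => (X ord0, cube_behead X)) => [[b Y] _ | X _];
  rewrite /= ?cube_cons0 ?cube_consK ?cube_eta.
Qed.

Lemma hamming_cons b Y (A : cube d.+1) :
  hamming (cube_cons b Y) A = ((b != A ord0) + hamming Y (cube_behead A))%N.
Proof.
rewrite /hamming -!sum1_card big_mkcond big_ord_recl /= [in RHS]big_mkcond.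
rewrite inE cube_cons0; congr (_ + _)%N.
by apply: eq_bigr => i _; rewrite !inE !ffunE liftK.
Qed.

End CubeCons.

Lemma sum_bool_pivot (V : nmodType) (F : bool -> V) (c : bool) :
  \sum_b F b = F c + F (~~ c).
Proof. by rewrite big_bool; case: c => //=; rewrite addrC. Qed.

Section Expectation.
Variable R : realFieldType.

Definition bern (x : R) (b : bool) : R := if b then x else 1 - x.

Lemma bern_negb x b : bern x (~~ b) = 1 - bern x b.
Proof. by case: b; rewrite /= ?subKr. Qed.

Lemma prod_dist_cons d (p : 'I_d.+1 -> R) b (Y : cube d) :
  prod_dist p (cube_cons b Y) = bern (p ord0) b * prod_dist (p \o lift ord0) Y.
Proof.
rewrite /prod_dist big_ord_recl cube_cons0; congr (_ * _).
by apply: eq_bigr => i _; rewrite ffunE liftK.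
Qed.

Lemma prod_dist_ge0 d (p : 'I_d -> R) X :
  (forall i, 0 <= p i <= 1) -> 0 <= prod_dist p X.
Proof.
by move=> p01; apply: prodr_ge0 => i _; case: (X i); have /andP[] := p01 i; lra.
Qed.

Definition expect (T : finType) (mu : T -> R) (f : T -> int) (h : int -> R) : R :=
  \sum_t mu t * h (f t).

Definition dominates_opp (T : finType) (mu : T -> R) (f : T -> int) : Prop :=
  forall h : int -> R, {homo h : x y / x <= y} ->
    expect mu f (fun z => h (- z)) <= expect mu f h.

Lemma ler_expect (T : finType) (mu : T -> R) f (h1 h2 : int -> R) :
  (forall t, 0 <= mu t) -> (forall z, h1 z <= h2 z) ->
  expect mu f h1 <= expect mu f h2.
Proof. by move=> mu_ge0 h12; apply: ler_sum => t _; apply: ler_wpM2l. Qed.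

Lemma eq_expect (T : finType) (mu : T -> R) f (h1 h2 : int -> R) :
  (forall z, h1 z = h2 z) -> expect mu f h1 = expect mu f h2.
Proof. by move=> h12; apply: eq_bigr => t _; rewrite h12. Qed.

(* The two sides are E[h(-(Z + S))] and E[h(Z + S)] for Z with law [mu] and
   an independent step S that is +1 with probability w and -1 otherwise. *)
Lemma dominates_opp_step (T : finType) (mu : T -> R) f (w : R) (h : int -> R) :
  (forall t, 0 <= mu t) -> dominates_opp mu f -> 1 / 2 <= w <= 1 ->
  {homo h : x y / x <= y} ->
  w * expect mu f (fun z => h (- (1 + z))) +
    (1 - w) * expect mu f (fun z => h (- (-1 + z)))
  <= w * expect mu f (fun z => h (1 + z)) +
    (1 - w) * expect mu f (fun z => h (-1 + z)).
Proof.
move=> mu_ge0 domf /andP[w_ge w_le1] h_homo.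
set P := expect _ _ (fun z => h (1 + z)); set Q := expect _ _ (fun z => h (-1 + z)).
set X1 := expect _ _ (fun z => h (- (1 + z))).
set X2 := expect _ _ (fun z => h (- (-1 + z))).
have X2_le_P : X2 <= P.
  rewrite /X2 (eq_expect _ _ (h2 := fun z => h (1 + - z))); last first.
    by move=> z; rewrite opprD opprK addrC.
  by apply: (domf (fun y => h (1 + y))) => x y xy; apply: h_homo; rewrite lerD2l.
have X1_le_Q : X1 <= Q.
  rewrite /X1 (eq_expect _ _ (h2 := fun z => h (-1 + - z))); last first.
    by move=> z; rewrite opprD addrC.
  by apply: (domf (fun y => h (-1 + y))) => x y xy; apply: h_homo; rewrite lerD2l.
have X1_le_X2 : X1 <= X2.
  by apply: ler_expect => // z; apply: h_homo; rewrite lerN2 lerD2r.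
(* The difference of the two sides is exactly the sum of these three terms. *)
have k1 : 0 <= w * (P - X2) by apply: mulr_ge0; lra.
have k2 : 0 <= (1 - w) * (Q - X1) by apply: mulr_ge0; lra.
have k3 : 0 <= (2 * w - 1) * (X2 - X1) by apply: mulr_ge0; lra.
nra.
Qed.

Definition bias d (A M X : cube d) : int := (hamming X A)%:Z - (hamming X M)%:Z.

Lemma expect_cons d (p : 'I_d.+1 -> R) (A M : cube d.+1) h :
  expect (prod_dist p) (bias A M) h =
  \sum_(b : bool) bern (p ord0) b *
    expect (prod_dist (p \o lift ord0)) (bias (cube_behead A) (cube_behead M))
      (fun z => h (((b != A ord0)%:Z - (b != M ord0)%:Z) + z)).
Proof.
rewrite /expect sum_cube_cons; apply: eq_bigr => b _; rewrite mulr_sumr.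
apply: eq_bigr => Y _; rewrite prod_dist_cons /bias !hamming_cons mulrA !PoszD.
by congr (_ * h _); rewrite opprD addrACA.
Qed.

Lemma prod_dist_dominates_opp d (p : 'I_d -> R) (A M : cube d) :
  (forall i, 0 <= p i <= 1) -> (forall i, 1 / 2 <= bern (p i) (M i)) ->
  dominates_opp (prod_dist p) (bias A M).
Proof.
elim: d p A M => [|d IH] p A M p01 M_mode h h_homo.
  apply: ler_sum => X _.
  have -> : bias A M X = 0.
    by rewrite /bias /hamming -!sum1_card !big_mkcond !big_ord0.
  by rewrite oppr0.
have bern_ge0 b : 0 <= bern (p ord0) b.
  by rewrite /bern; case: b; have /andP[] := p01 ord0; lra.
rewrite !expect_cons.
have {}IH := IH (p \o lift ord0) (cube_behead A) (cube_behead M)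
  (fun i => p01 _) (fun i => ltac:(by rewrite ffunE; apply: M_mode)).
case: (eqVneq (A ord0) (M ord0)) => [-> | AM].
  apply: ler_sum => b _; apply: ler_wpM2l => //; rewrite subrr.
  under eq_expect => z do rewrite add0r.
  under [leRHS]eq_expect => z do rewrite add0r.
  exact: IH.
have -> : A ord0 = ~~ M ord0 by move: AM; case: (A ord0); case: (M ord0).
have w_bounds : 1 / 2 <= bern (p ord0) (M ord0) <= 1.
  by rewrite M_mode /bern; case: (M ord0); have /andP[] := p01 ord0; lra.
rewrite !(sum_bool_pivot _ (M ord0)) bern_negb.
have := dominates_opp_step _ IH w_bounds h_homo.
by case: (M ord0); rewrite /= !subr0 !sub0r;
  apply=> Y; apply: prod_dist_ge0 => i; apply: p01.
Qed.

End Expectation.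

Section Payoff.
Variables (R : realFieldType) (d : nat) (mu : cube d -> R).

Lemma meas_indicator (S : {set cube d}) : meas mu S = \sum_X mu X * (X \in S)%:R.
Proof.
rewrite /meas big_mkcond; apply: eq_bigr => X _.
by case: (X \in S); rewrite ?mulr1 ?mulr0.
Qed.

Lemma meas_Vor_bias (A M : cube d) :
  meas mu (Vor M A) = expect mu (bias A M) (fun z => ((0 < z)%R)%:R).
Proof. by rewrite meas_indicator; apply: eq_bigr => X _; rewrite inE subr_gt0 ltz_nat. Qed.

Lemma meas_Vor_bias_opp (A M : cube d) :
  meas mu (Vor A M) = expect mu (bias A M) (fun z => ((0 < - z)%R)%:R).
Proof.
by rewrite meas_indicator; apply: eq_bigr => X _; rewrite inE opprB subr_gt0 ltz_nat.
Qed.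

Lemma meas_Vor_Tie (A B : cube d) :
  meas mu (Vor A B) + meas mu (Vor B A) + meas mu (Tie A B) = meas mu setT.
Proof.
rewrite !meas_indicator -!big_split /=; apply: eq_bigr => X _.
rewrite -!mulrDr !inE; congr (_ * _).
by case: ltngtP; rewrite ?addr0 ?add0r.
Qed.

Lemma Tie_sym (A B : cube d) : Tie A B = Tie B A.
Proof. by apply/setP => X; rewrite !inE eq_sym. Qed.

Lemma payoff2E (A B : cube d) : payoff2 mu A B = payoff1 mu B A.
Proof. by rewrite /payoff2 /payoff1 Tie_sym. Qed.

Lemma payoff1_le_copy (A B : cube d) :
  meas mu (Vor A B) <= meas mu (Vor B A) -> payoff1 mu A B <= payoff1 mu B B.
Proof.
move=> VAB_le; rewrite /payoff1.
have Vor_self : Vor B B = set0 by apply/setP => X; rewrite !inE ltnn.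
have Tie_self : Tie B B = setT by apply/setP => X; rewrite !inE eqxx.
have := meas_Vor_Tie A B.
have meas_set0 : meas mu set0 = 0 by rewrite /meas big_set0.
rewrite Vor_self Tie_self meas_set0 add0r => <-.
lra.
Qed.

End Payoff.

Lemma mode_Vor_le (R : realFieldType) d (p : 'I_d -> R) (A M : cube d) :
  (forall i, 0 <= p i <= 1) -> (forall i, 1 / 2 <= bern (p i) (M i)) ->
  meas (prod_dist p) (Vor A M) <= meas (prod_dist p) (Vor M A).
Proof.
move=> p01 M_mode; rewrite meas_Vor_bias_opp meas_Vor_bias.
apply: (prod_dist_dominates_opp A p01 M_mode) => x y xy.
by case: ltP => [x_gt0|_]; rewrite ?ler0n // (lt_le_trans x_gt0 xy).
Qed.

Theorem mainTheorem8 (R : realFieldType) (d : nat) (p : 'I_d -> R) :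
  (forall i, 0 < p i < 1) ->
  (forall i, p i != 1 / 2) ->
  exists A B : cube d, equilibrium (prod_dist p) A B.
Proof.
move=> p01 _.
have {}p01 i : 0 <= p i <= 1 by have /andP[? ?] := p01 i; rewrite !ltW.
pose M : cube d := [ffun i => 1 / 2 < p i].
have M_mode i : 1 / 2 <= bern (p i) (M i) by rewrite /bern ffunE; case: ltP; lra.
exists M, M; split => [A | B].
- exact/payoff1_le_copy/mode_Vor_le.
- by rewrite !payoff2E; exact/payoff1_le_copy/mode_Vor_le.
Qed.
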